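(* Let $\mathcal{T}$ be a tangle of order $k$ in a connectivity system $(E,\lambda)$, and let $\mathcal{S}$ be a tree compatible set. Let $\Phi=(P_1,\ldots, P_n)$ be a $k$-flower in $\mathcal{T}$ of $\mathcal{S}$-order at least two with no $\mathcal{T}$-loose petals. If $X\subseteq E-P_1$ is a non-empty $\mathcal{T}$-weak set such that $P_1\cup X$ is $k$-separating, then: (i) $\Phi '=(P_1\cup X, P_2-X,\ldots, P_n-X)$ is a $k$-flower in $\mathcal{T}$ that is $\mathcal{T}$-equivalent to $\Phi$ with respect to $\mathcal{S}$; (ii) $\mathrm{fcl}_{\mathcal{T}}(P_1)=\mathrm{fcl}_{\mathcal{T}}(P_1\cup X)$ and $\mathrm{fcl}_{\mathcal{T}}(P_i-X)=\mathrm{fcl}_{\mathcal{T}}(P_i)$ for all $i\in \{2,\dots,n\}$.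
   Context: A connectivity system is a pair $(E,\lambda)$ with $E$ finite and $\lambda$ an integer-valued symmetric submodular function on subsets of $E$. $X$ is $k$-separating if $\lambda(X)\le k$; a $k$-separation is an unordered partition $(X,E-X)$ with $\lambda(X)\le k$. A tangle of order $k$ is a collection $\mathcal T$ of subsets of $E$ with (T1) $\lambda(A)<k$ for $A\in\mathcal T$; (T2) if $\lambda(A)\le k-1$ then $A$ or $E-A$ is in $\mathcal T$; (T3) $A\cup B\cup C\ne E$ for $A,B,C\in\mathcal T$; (T4) $E-\{e\}\notin\mathcal T$. A set is $\mathcal T$-weak if contained in a member of $\mathcal T$, otherwise $\mathcal T$-strong; partitions/$k$-separations are $\mathcal T$-strong if all parts are. A $\mathcal T$-strong $k$-separating $X$ is fully closed if $X\cup Y$ is not $k$-separating for every nonempty $\mathcal T$-weak $Y\subseteq E-X$; $\mathrm{fcl}_{\mathcal T}(X)$ is the intersection of all fully closed $k$-separating sets containing $X$. $\mathcal T$-strong $k$-separations $(X,Y),(X',Y')$ are $\mathcal T$-equivalent if $\{\mathrm{fcl}_{\mathcal T}(X),\mathrm{fcl}_{\mathcal T}(Y)\}=\{\mathrm{fcl}_{\mathcal T}(X'),\mathrm{fcl}_{\mathcal T}(Y')\}$. $X$ is $\mathcal T$-sequential if it is $k$-separating, $E-X$ is $\mathcal T$-strong and $\mathrm{fcl}_{\mathcal T}(E-X)=E$. Let $\mathcal S$ be a set of non-$\mathcal T$-sequential $k$-separating sets with $\mathcal T$-strong complements; a $(k,\mathcal S)$-separation is a $k$-separation $(X,E-X)$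 with $X,E-X\in\mathcal S$. $\mathcal S$ is tree compatible if (S1) any $\mathcal T$-strong $k$-separation $\mathcal T$-equivalent to a $(k,\mathcal S)$-separation is a $(k,\mathcal S)$-separation, and (S2) if $X\in\mathcal S$ and $(Y,E-Y)$ is a $\mathcal T$-strong $k$-separation with $X\subseteq Y$ then $Y\in\mathcal S$. A $k$-flower in $\mathcal T$ is a $\mathcal T$-strong partition $(P_1,\dots,P_n)$ of $E$ with $P_i$ and $P_i\cup P_{i+1}$ $k$-separating for all $i$ (mod $n$); it displays $(X,E-X)$ if $X$ is a union of petals. $\Phi_1\preccurlyeq_{\mathcal S}\Phi_2$ if each $(k,\mathcal S)$-separation displayed by $\Phi_1$ is $\mathcal T$-equivalent to one displayed by $\Phi_2$; $\mathcal T$-equivalence with respect to $\mathcal S$ means both directions hold. The $\mathcal S$-order of $\Phi$ is the minimum number of petals of a $k$-flower equivalent to $\Phi$. A $k$-flower is a $k$-anemone if every nonempty union of petals is $k$-separating. For $n\ge2$, a petal $P_i$ is $\mathcal T$-loose if $P_i\subseteq\mathrm{fcl}_{\mathcal T}(P_j)$ for some petal $P_j\ne P_i$ that is consecutive to $P_i$ in the cyclic order (for a $k$-anemone, any other petal). *)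

From HB Require Import structures.
From mathcomp Require Import all_boot all_order all_algebra.
Set Implicit Arguments. Unset Strict Implicit. Unset Printing Implicit Defensive.
Import Order.TTheory GRing.Theory Num.Theory.
Local Open Scope ring_scope.

Section Connectivity.
Variables (E : finType) (lam : {set E} -> int) (k : int) (T : {set {set E}}).

Definition connectivity_system : Prop :=
  (forall A : {set E}, lam (~: A) = lam A) /\
  (forall A B : {set E}, lam (A :|: B) + lam (A :&: B) <= lam A + lam B).

Definition kseparating (X : {set E}) : bool := lam X <= k.

Definition tangle : Prop :=
  (forall A, A \in T -> lam A < k) /\
  (forall A, lam A <= k - 1 -> (A \in T) \/ (~: A \in T)) /\
  (forall A B C, A \in T -> B \in T -> C \in T -> A :|: B :|: C != setT) /\
  (forall e : E, ~: [set e] \notin T).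

Definition weak (Y : {set E}) : bool := [exists A in T, Y \subset A].
Definition strong (Y : {set E}) : bool := ~~ weak Y.

Definition fully_closed (X : {set E}) : bool :=
  [&& strong X, kseparating X &
   [forall Y : {set E},
      [&& Y != set0, weak Y & Y \subset ~: X] ==> ~~ kseparating (X :|: Y)]].

Definition fcl (X : {set E}) : {set E} :=
  \bigcap_(Y | fully_closed Y && (X \subset Y)) Y.

Definition strong_ksep (X : {set E}) : bool :=
  [&& kseparating X, strong X & strong (~: X)].

Definition T_equiv (X X' : {set E}) : bool :=
  [set fcl X; fcl (~: X)] == [set fcl X'; fcl (~: X')].

Definition T_sequential (X : {set E}) : bool :=
  [&& kseparating X, strong (~: X) & fcl (~: X) == setT].

Section S.
Variable S : {set {set E}}.

Definition kS_sep (X : {set E}) : bool :=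
  [&& kseparating X, X \in S & ~: X \in S].

Definition tree_compatible : Prop :=
  (forall X, X \in S -> [&& kseparating X, ~~ T_sequential X & strong (~: X)]) /\
  (forall X Y, kS_sep X -> strong_ksep Y -> T_equiv X Y -> kS_sep Y) /\
  (forall X Y, X \in S -> strong_ksep Y -> X \subset Y -> Y \in S).

(* flowers are represented as sequences of petals P_1 :: ... :: P_n (indices from 0) *)
Definition petal (F : seq {set E}) (i : nat) : {set E} := nth set0 F i.

Definition kflower (F : seq {set E}) : Prop :=
  (forall i j, (i < size F)%N -> (j < size F)%N -> i != j ->
     [disjoint petal F i & petal F j]) /\
  (\bigcup_(i < size F) petal F i = setT) /\
  (forall i, (i < size F)%N ->
     [&& strong (petal F i), kseparating (petal F i) &
         kseparating (petal F i :|: petal F ((i.+1 %% size F)%N))]).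

Definition displays (F : seq {set E}) (X : {set E}) : Prop :=
  exists I : {set 'I_(size F)}, X = \bigcup_(i in I) petal F i.

Definition flower_preceq (F1 F2 : seq {set E}) : Prop :=
  forall X, displays F1 X -> kS_sep X ->
    exists Y, [/\ displays F2 Y, kS_sep Y & T_equiv X Y].

Definition flower_equiv (F1 F2 : seq {set E}) : Prop :=
  flower_preceq F1 F2 /\ flower_preceq F2 F1.

(* the S-order of F (min number of petals of an equivalent k-flower) is >= m *)
Definition S_order_ge (m : nat) (F : seq {set E}) : Prop :=
  forall G, kflower G -> flower_equiv F G -> (m <= size G)%N.

Definition anemone (F : seq {set E}) : Prop :=
  kflower F /\
  forall I : {set 'I_(size F)}, I != set0 -> kseparating (\bigcup_(i in I) petal F i).

Definition T_loose (F : seq {set E}) (i : nat) : Prop :=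
  exists j, [/\ (j < size F)%N, j != i,
     (j == (i.+1 %% size F)%N) || (i == (j.+1 %% size F)%N) \/ anemone F &
     petal F i \subset fcl (petal F j)].

Definition no_loose_petals (F : seq {set E}) : Prop :=
  forall i, (i < size F)%N -> ~ T_loose F i.

End S.
End Connectivity.

(* Let Q_1 = P_1 ∪ X and Q_i = P_i - X for i >= 2.  The weak set X can be added to the
   strong set P_1 without leaving the k-separating sets, so X ⊆ fcl(P_1).  Along the flower
   every Q_i is strong: if Q_{i+1} were weak, the k-separating set Q_i ∪ Q_{i+1} would lie in
   fcl(Q_i) ⊆ fcl(P_i), hence so would P_{i+1} (it differs from Q_{i+1} by part of X), and
   P_{i+1} would be loose.  As P_i - Q_i ⊆ X is weak, P_i and Q_i then have the same full
   closure.  Uncrossing with P_1 ∪ X, and restoring the petals P_i one at a time, shows that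
   a union of petals of Φ is k-separating exactly when the corresponding union of petals of
   Φ' is.  So Φ' is a flower whose displayed separations are T-equivalent to those of Φ,
   and (S1) transfers membership in S. *)

From mathcomp Require Import all_boot all_order all_algebra zify.
Set Implicit Arguments. Unset Strict Implicit. Unset Printing Implicit Defensive.
Import Order.TTheory.
Local Open Scope ring_scope.

Section PetalUnions.
Variable E : finType.
Implicit Types (Fs : seq {set E}) (J : pred nat).

Definition petal_union Fs J : {set E} := \bigcup_(i < size Fs | J i) petal Fs i.

Lemma mem_petal_union Fs J x :
  reflect (exists2 i, (i < size Fs)%N & J i && (x \in petal Fs i))
          (x \in petal_union Fs J).
Proof.
apply: (iffP bigcupP) => [[i Ji xi]|[i lt_i /andP [Ji xi]]]; first by exists i; rewrite ?Ji.
by exists (Ordinal lt_i).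
Qed.

Lemma petal_unionU Fs J1 J2 :
  petal_union Fs (predU J1 J2) = petal_union Fs J1 :|: petal_union Fs J2.
Proof.
apply/setP => x; rewrite inE; apply/mem_petal_union/orP.
  move=> [i lt_i /andP [/orP [Ji|Ji] xi]]; [left|right];
  by apply/mem_petal_union; exists i; rewrite ?Ji.
by move=> [] /mem_petal_union [i lt_i /andP [Ji xi]]; exists i; rewrite //= Ji ?orbT.
Qed.

Lemma petal_union1 Fs i : (i < size Fs)%N -> petal_union Fs (pred1 i) = petal Fs i.
Proof. by move=> lt_i; apply: (big_pred1 (Ordinal lt_i)). Qed.

Lemma petal_union2 Fs i j : (i < size Fs)%N -> (j < size Fs)%N ->
  petal_union Fs (pred2 i j) = petal Fs i :|: petal Fs j.
Proof.
by move=> lt_i lt_j; rewrite -(petal_union1 lt_i) -(petal_union1 lt_j) -petal_unionU.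
Qed.

Lemma petal_sub_union Fs J i : (i < size Fs)%N -> J i -> petal Fs i \subset petal_union Fs J.
Proof. by move=> lt_i Ji; apply: (bigcup_sup (Ordinal lt_i)). Qed.

Lemma petal_union_eq0 Fs J : ~~ has J (iota 0 (size Fs)) -> petal_union Fs J = set0.
Proof.
move=> /hasPn noJ; apply: big_pred0 => i.
by apply/negbTE/noJ; rewrite mem_iota ltn_ord.
Qed.

Lemma displaysP Fs Y : displays Fs Y <-> exists J, Y = petal_union Fs J.
Proof.
split=> [[I ->]|[J ->]].
  exists (fun i => if insub i is Some j then j \in I else false).
  by apply: eq_bigl => i; rewrite valK.
by exists [set i : 'I_(size Fs) | J i]; apply: eq_bigl => i; rewrite inE.
Qed.

Lemma petal_unionC Fs J :
  (forall i j, (i < size Fs)%N -> (j < size Fs)%N -> i != j ->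
     [disjoint petal Fs i & petal Fs j]) ->
  \bigcup_(i < size Fs) petal Fs i = setT ->
  ~: petal_union Fs J = petal_union Fs (predC J).
Proof.
move=> disjF covF; apply/setP => x; rewrite inE.
have /bigcupP [i _ xi] : x \in \bigcup_(i < size Fs) petal Fs i by rewrite covF.
apply/negP/mem_petal_union => [nUx|[j lt_j /andP [nJj xj]] /mem_petal_union].
  exists i => //; rewrite xi andbT /=.
  by apply/negP => Ji; apply: nUx; apply/mem_petal_union; exists i; rewrite ?Ji.
move=> [l lt_l /andP [Jl xl]]; have [eq_jl|ne_jl] := eqVneq j l.
  by move: nJj; rewrite eq_jl /= Jl.
by move: (disjointFr (disjF _ _ lt_j lt_l ne_jl) xj); rewrite xl.
Qed.

End PetalUnions.

Section Tangle.
Variables (E : finType) (lam : {set E} -> int) (k : int) (T : {set {set E}}).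
Hypothesis lam_conn : connectivity_system lam.
Hypothesis T_tangle : tangle lam k T.

Implicit Types A B W Y : {set E}.
Local Notation ks := (kseparating lam k).
Local Notation weak := (weak T).
Local Notation strong := (strong T).
Local Notation fcl := (fcl lam k T).

Lemma lamC A : lam (~: A) = lam A.
Proof. by case: lam_conn. Qed.

Lemma lam_submod A B : lam (A :|: B) + lam (A :&: B) <= lam A + lam B.
Proof. by case: lam_conn. Qed.

Lemma lam_set0_le A : lam set0 <= lam A.
Proof. by have := lam_submod A (~: A); rewrite setUCr setICr -setC0 !lamC; lia. Qed.

Lemma ksC A : ks (~: A) = ks A.
Proof. by rewrite /kseparating lamC. Qed.

Lemma weakS A B : A \subset B -> weak B -> weak A.
Proof.
by move=> AB /exists_inP [C CT BC]; apply/exists_inP; exists C; rewrite ?(subset_trans AB).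
Qed.

Lemma strongS A B : A \subset B -> strong A -> strong B.
Proof. by move=> AB; apply: contra; apply: weakS. Qed.

Lemma lam_ge_strong A : strong A -> strong (~: A) -> k <= lam A.
Proof.
case: T_tangle => _ [T2 _] sA sAc; rewrite leNgt; apply/negP => lt_Ak.
have [AT|AcT] := T2 A ltac:(lia).
  by case/negP: sA; apply/exists_inP; exists A.
by case/negP: sAc; apply/exists_inP; exists (~: A).
Qed.

Lemma ksI A B : ks A -> ks B -> strong (A :|: B) -> strong (~: (A :|: B)) ->
  ks (A :&: B).
Proof.
rewrite /kseparating => kA kB s sc.
by have := lam_ge_strong s sc; have := lam_submod A B; lia.
Qed.

Lemma ksU A B : ks A -> ks B -> strong (A :&: B) -> strong (~: (A :&: B)) ->
  ks (A :|: B).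
Proof.
move=> kA kB s sc; rewrite -ksC setCU.
by apply: ksI; rewrite ?ksC // -setCI ?setCK.
Qed.

Lemma sub_fcl A : A \subset fcl A.
Proof. by apply/bigcapsP => Y /andP []. Qed.

Lemma fcl_min A B : A \subset fcl B -> fcl A \subset fcl B.
Proof.
move=> AB; apply/bigcapsP => Y /andP [clY BY].
have BY' : fcl B \subset Y by apply: bigcap_inf; rewrite clY BY.
by apply: bigcap_inf; rewrite clY (subset_trans AB BY').
Qed.

Lemma fclS A B : A \subset B -> fcl A \subset fcl B.
Proof. by move=> AB; apply/fcl_min/(subset_trans AB)/sub_fcl. Qed.

Lemma eq_fcl A B : A \subset fcl B -> B \subset fcl A -> fcl A = fcl B.
Proof. by move=> AB BA; apply/eqP; rewrite eqEsubset !fcl_min. Qed.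

Lemma weak_sub_fcl A W : strong A -> weak W -> ks (A :|: W) -> W \subset fcl A.
Proof.
move=> sA wW kAW; apply/bigcapsP => Y /andP [/and3P [sY kY /forallP clY] AY].
apply/negPn/negP => nWY; set D := Y :&: (A :|: W).
have sD : strong D by apply: strongS sA; rewrite subsetI AY subsetUl.
(* Either uncrossing Y with A ∪ W makes Y ∪ (W - Y) k-separating, or E - Y is weak and
   Y ∪ (E - Y) = E is k-separating; both contradict the full closure of Y. *)
have [sDc|/negPn wDc] := boolP (strong (~: D)).
  have := clY (W :\: Y); rewrite setD_eq0 nWY (weakS (subsetDl W Y) wW).
  rewrite setDE subIset ?subxx ?orbT //= -setDE.
  have -> : Y :|: (W :\: Y) = Y :|: (A :|: W).
    by rewrite setDE setUIr setUCr setIT setUA (setUidPl AY).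
  by rewrite ksU.
have := clY (~: Y); rewrite setUCr subxx (weakS _ wDc) ?setCS ?subsetIl //.
have -> : ~: Y != set0 by apply: contra nWY => /eqP Yc0; rewrite -[Y]setCK Yc0 setC0 subsetT.
rewrite /= /kseparating -setC0 lamC; move: kY; rewrite /kseparating.
by have := lam_set0_le Y; lia.
Qed.

Lemma sub_fcl_weakD A B : strong A -> A \subset B -> ks B -> weak (B :\: A) ->
  B \subset fcl A.
Proof.
move=> sA AB kB wBA; rewrite -(setID B A) (setIidPr AB) subUset sub_fcl.
by apply: weak_sub_fcl; rewrite // -{1}(setIidPr AB) setID.
Qed.

Lemma sub_fcl_petal_union Fs1 Fs2 J : size Fs1 = size Fs2 ->
  (forall i, (i < size Fs1)%N -> petal Fs1 i \subset fcl (petal Fs2 i)) ->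
  fcl (petal_union Fs1 J) \subset fcl (petal_union Fs2 J).
Proof.
move=> eq_size sub; apply/fcl_min/bigcupsP => i Ji.
apply: subset_trans (sub i (ltn_ord i)) (fclS _).
by apply: petal_sub_union; rewrite // -eq_size.
Qed.

Section KFlower.
Variable Fs : seq {set E}.
Hypothesis Fs_flower : kflower lam k T Fs.
Local Notation n := (size Fs).
Local Notation p := (petal Fs).

Lemma petal_strong i : (i < n)%N -> strong (p i).
Proof. by case: Fs_flower => _ [_ h] /h /and3P []. Qed.

Lemma petal_ks i : (i < n)%N -> ks (p i).
Proof. by case: Fs_flower => _ [_ h] /h /and3P []. Qed.

Lemma petal_pair_ks i : (i < n)%N -> ks (p i :|: p (i.+1 %% n)).
Proof. by case: Fs_flower => _ [_ h] /h /and3P []. Qed.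

Lemma mem_petal_inj i j x : (i < n)%N -> (j < n)%N -> x \in p i -> x \in p j -> i = j.
Proof.
move=> lt_i lt_j xi xj; apply/eqP; apply: contraT => ne_ij.
by case: Fs_flower => disjF _; rewrite (disjointFr (disjF _ _ lt_i lt_j ne_ij) xi) in xj.
Qed.

Lemma flower_petal_unionC J : ~: petal_union Fs J = petal_union Fs (predC J).
Proof. by case: Fs_flower => disjF [covF _]; apply: petal_unionC. Qed.

Lemma strong_petal_union J : weak set0 ->
  strong (petal_union Fs J) = has J (iota 0 n).
Proof.
move=> w0; have [/hasP [i]|noJ] := boolP (has J (iota 0 n)).
  rewrite mem_iota => /andP [_ lt_i] Ji.
  exact: strongS (petal_sub_union lt_i Ji) (petal_strong lt_i).
by rewrite petal_union_eq0 // /strong w0.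
Qed.

End KFlower.

Section Flower.
Variables (P1 : {set E}) (Ps : seq {set E}) (X : {set E}).
Local Notation F := (P1 :: Ps).
Local Notation G := ((P1 :|: X) :: [seq P :\: X | P <- Ps]).
Local Notation n := (size F).
Local Notation p := (petal F).
Local Notation q := (petal G).
Hypothesis F_flower : kflower lam k T F.
Hypothesis F_not_loose : no_loose_petals lam k T F.
Hypothesis X_weak : weak X.
Hypothesis P1X_ks : ks (P1 :|: X).

Lemma weak_set0 : weak set0.
Proof. exact: weakS (sub0set X) X_weak. Qed.

Lemma size_G : size G = n.
Proof. by rewrite /= size_map. Qed.

Lemma petalGS i : q i.+1 = p i.+1 :\: X.
Proof.
rewrite /petal /=; case: (ltnP i (size Ps)) => [lt_i|le_i].
  by rewrite (nth_map set0).
by rewrite !nth_default ?size_map // set0D.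
Qed.

Lemma mem_petalG x i : (x \in q i) = if x \in X then i == 0%N else x \in p i.
Proof.
by case: i => [|i]; rewrite ?petalGS !inE; case: (x \in X); rewrite ?orbT ?orbF ?andbF.
Qed.

Lemma petal_sub_P1C i : (0 < i)%N -> p i \subset ~: P1.
Proof.
move=> i_gt0; apply/subsetP => x xi; rewrite inE; apply/negP => x1.
have [lt_i|le_i] := ltnP i n; last by move: xi; rewrite /petal nth_default ?inE.
by have := mem_petal_inj F_flower lt_i (ltn0Sn _) xi x1; move: i_gt0 => /[swap] ->.
Qed.

Lemma P1_strong : strong P1.
Proof. exact: (petal_strong F_flower (ltn0Sn _)). Qed.

Lemma ks_setD_X B : B \subset ~: P1 -> strong B -> ks B -> ks (B :\: X).
Proof.
move=> B_P1C sB kB.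
have <- : B :&: ~: (P1 :|: X) = B :\: X by rewrite setCU setIA (setIidPl B_P1C) setDE.
apply: ksI; rewrite ?ksC //; first exact: strongS (subsetUl _ _) sB.
by apply: strongS P1_strong; rewrite setCU setCK subsetI subsetUl subsetC B_P1C.
Qed.

Lemma petal_unionG J :
  petal_union G J = if J 0%N then petal_union F J :|: X else petal_union F J :\: X.
Proof.
apply/setP => x.
have -> : (x \in petal_union G J) = if x \in X then J 0%N else x \in petal_union F J.
  case: ifP => xX; apply/mem_petal_union/idP; rewrite size_G.
  - by move=> [i _ /andP [Ji]]; rewrite mem_petalG xX => /eqP i0; rewrite -i0.
  - by move=> J0; exists 0%N; rewrite // mem_petalG xX J0.
  - move=> [i lt_i /andP [Ji]]; rewrite mem_petalG xX => xi.
    by apply/mem_petal_union; exists i; rewrite ?Ji.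
  - move=> /mem_petal_union [i lt_i /andP [Ji xi]]; exists i => //.
    by rewrite Ji mem_petalG xX.
by case: (J 0%N); rewrite !inE; case: (x \in X); rewrite ?orbT ?orbF.
Qed.

Lemma petalG_disjoint i j : (i < size G)%N -> (j < size G)%N -> i != j ->
  [disjoint q i & q j].
Proof.
rewrite size_G => lt_i lt_j; apply: contraNT => /pred0Pn [x /andP []].
change (x \in q i -> x \in q j -> i == j); rewrite !mem_petalG.
case: (x \in X) => [/eqP-> /eqP->|xi xj] //.
by rewrite (mem_petal_inj F_flower lt_i lt_j xi xj).
Qed.

Lemma petalG_cover : \bigcup_(i < size G) q i = setT.
Proof.
change (petal_union G predT = setT); rewrite petal_unionG /=.
by case: F_flower => _ [covF _]; rewrite [petal_union _ _]covF setTU.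
Qed.

Lemma petal_unionG_C J : ~: petal_union G J = petal_union G (predC J).
Proof. exact: petal_unionC petalG_disjoint petalG_cover. Qed.

Lemma ks_petal_union_setD_X J : J 0%N = false ->
  ks (petal_union F J) -> ks (petal_union F J :\: X).
Proof.
move=> J0 kU; have [hasJ|noJ] := boolP (has J (iota 0 n)); last first.
  by move: kU; rewrite petal_union_eq0 // set0D.
apply: ks_setD_X; rewrite ?strong_petal_union ?weak_set0 //.
apply/bigcupsP => i Ji; apply: petal_sub_P1C.
by rewrite lt0n; apply: contraTneq Ji => ->; rewrite J0.
Qed.

Lemma ks_unionG_of_F J : ks (petal_union F J) -> ks (petal_union G J).
Proof.
wlog J0 : J / J 0%N = false => [base|].
  case J0: (J 0%N); last exact: base.
  rewrite -[ks (petal_union G J)]ksC -[ks (petal_union F J)]ksC.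
  rewrite petal_unionG_C flower_petal_unionC //.
  by apply: base; rewrite /= J0.
by rewrite petal_unionG J0; apply: ks_petal_union_setD_X.
Qed.

Lemma petalG_sub_fcl i : q i \subset fcl (p i).
Proof.
case: i => [|i]; last by rewrite petalGS (subset_trans (subsetDl _ _) (sub_fcl _)).
by rewrite subUset sub_fcl (weak_sub_fcl P1_strong X_weak P1X_ks).
Qed.

Lemma sub_fcl_unionG J : strong (petal_union G J) -> ks (petal_union F J) ->
  petal_union F J \subset fcl (petal_union G J).
Proof.
rewrite petal_unionG; case: (J 0%N) => sG kF.
  exact: subset_trans (subsetUl _ _) (sub_fcl _).
apply: sub_fcl_weakD sG (subsetDl _ _) kF _.
by apply: weakS X_weak; rewrite setDDr setDv set0U subsetIr.
Qed.

Lemma petalG_strong i : (i < n)%N -> strong (q i).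
Proof.
elim: i => [|i IH] lt_i; first exact: strongS (subsetUl _ _) P1_strong.
have lt_i' := ltnW lt_i; have sq := IH lt_i'.
apply/negP => wq; set J := pred2 i i.+1.
have UG : petal_union G J = q i :|: q i.+1 by rewrite petal_union2 ?size_G.
have kF : ks (petal_union F J).
  by rewrite petal_union2 //; have := petal_pair_ks F_flower lt_i'; rewrite modn_small.
have sG : strong (petal_union G J) by rewrite UG (strongS (subsetUl _ _) sq).
have UG_fcl : petal_union G J \subset fcl (q i).
  apply: sub_fcl_weakD sq _ (ks_unionG_of_F kF) _; rewrite UG ?subsetUl //.
  by apply: weakS wq; rewrite setDUl setDv set0U subsetDl.
have loose : p i.+1 \subset fcl (p i).
  have Ji : J i.+1 by rewrite /= eqxx orbT.
  apply: subset_trans (petal_sub_union lt_i Ji) _.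
  apply: subset_trans (sub_fcl_unionG sG kF) (fcl_min _).
  exact: subset_trans UG_fcl (fcl_min (petalG_sub_fcl i)).
apply: (F_not_loose lt_i); exists i; split => //; first by rewrite neq_ltn ltnSn.
by left; rewrite (modn_small lt_i) eqxx orbT.
Qed.

Lemma fcl_petalG i : (i < n)%N -> fcl (q i) = fcl (p i).
Proof.
move=> lt_i; apply: eq_fcl (petalG_sub_fcl i) _.
have lt_iG : (i < size G)%N by rewrite size_G.
rewrite -(petal_union1 lt_i) -(petal_union1 lt_iG).
by apply: sub_fcl_unionG; rewrite petal_union1 ?petalG_strong ?(petal_ks F_flower).
Qed.

Lemma ks_petal_union_of_setD_X J : J 0%N = false ->
  ks (petal_union F J :\: X) -> ks (petal_union F J).
Proof.
move=> J0 kD.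
pose A m := petal_union F J :\: X :|: \bigcup_(0 <= i < m | J i) p i.
suff /(_ n) : forall m, ks (A m).
  by rewrite /A big_mkord (setUidPr (subsetDl _ _)).
elim=> [|m IH]; first by rewrite /A big_geq ?setU0.
rewrite /A big_mkcond big_nat_recr //= -big_mkcond setUA -/(A m).
case Jm: (J m); last by rewrite setU0.
have [lt_m|le_m] := ltnP m n; last by rewrite /petal nth_default ?setU0.
case: m Jm lt_m IH => [|m] Jm lt_m IH; first by rewrite J0 in Jm.
have disj : [disjoint p m.+1 & \bigcup_(0 <= i < m.+1 | J i) p i].
  rewrite big_mkord; apply/bigcup_disjoint => i _; case: F_flower => disjF _.
  by apply: disjF; rewrite ?(ltn_trans (ltn_ord i)) // neq_ltn ltn_ord orbT.
have A_p : A m.+1 :&: p m.+1 = q m.+1.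
  rewrite setIC setIUr (disjoint_setI0 disj) setU0 setIDA petalGS.
  by rewrite (setIidPl (petal_sub_union lt_m Jm)).
apply: ksU; rewrite ?A_p ?petalG_strong ?(petal_ks F_flower) //.
apply: strongS P1_strong; rewrite subsetC petalGS.
exact: subset_trans (subsetDl _ _) (petal_sub_P1C _).
Qed.

Lemma ks_unionF_of_G J : ks (petal_union G J) -> ks (petal_union F J).
Proof.
wlog J0 : J / J 0%N = false => [base|].
  case J0: (J 0%N); last exact: base.
  rewrite -[ks (petal_union G J)]ksC -[ks (petal_union F J)]ksC.
  rewrite petal_unionG_C flower_petal_unionC //.
  by apply: base; rewrite /= J0.
by rewrite petal_unionG J0; apply: ks_petal_union_of_setD_X.
Qed.

Lemma ks_unionG J : ks (petal_union F J) = ks (petal_union G J).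
Proof. by apply/idP/idP; [apply: ks_unionG_of_F | apply: ks_unionF_of_G]. Qed.

Lemma G_flower : kflower lam k T G.
Proof.
split; [exact: petalG_disjoint | split; [exact: petalG_cover | rewrite size_G]].
move=> i lt_i; have lt_iG : (i < size G)%N by rewrite size_G.
have lt_i1 : (i.+1 %% n < n)%N by rewrite ltn_pmod.
have lt_i1G : (i.+1 %% n < size G)%N by rewrite size_G.
rewrite petalG_strong // -(petal_union2 lt_iG lt_i1G) -(petal_union1 lt_iG).
rewrite -!ks_unionG petal_union1 ?petal_union2 //.
by rewrite (petal_ks F_flower) ?(petal_pair_ks F_flower).
Qed.

Lemma fcl_unionG J : fcl (petal_union F J) = fcl (petal_union G J).
Proof.
apply/eqP; rewrite eqEsubset; apply/andP; split;
  apply: sub_fcl_petal_union; rewrite ?size_G // => i lt_i.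
  by rewrite fcl_petalG ?sub_fcl.
exact: petalG_sub_fcl.
Qed.

End Flower.

Section TreeCompatible.
Variable S : {set {set E}}.
Hypothesis S_tc : tree_compatible lam k T S.

Lemma kS_sep_strong Y : kS_sep lam k S Y -> strong Y && strong (~: Y).
Proof.
case: S_tc => S_sep _ /and3P [_ YS YcS].
have /and3P [_ _ ->] := S_sep _ YS.
by have /and3P [_ _] := S_sep _ YcS; rewrite setCK => ->.
Qed.

Lemma flower_preceq_transfer Fs1 Fs2 : weak set0 ->
  kflower lam k T Fs1 -> kflower lam k T Fs2 -> size Fs1 = size Fs2 ->
  (forall J, ks (petal_union Fs1 J) = ks (petal_union Fs2 J)) ->
  (forall J, fcl (petal_union Fs1 J) = fcl (petal_union Fs2 J)) ->
  flower_preceq lam k T S Fs1 Fs2.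
Proof.
move=> w0 fl1 fl2 eq_size eq_ks12 eq_fcl12 Y /displaysP [J ->] kS_Y.
have Teq : T_equiv lam k T (petal_union Fs1 J) (petal_union Fs2 J).
  by rewrite /T_equiv !flower_petal_unionC // !eq_fcl12.
exists (petal_union Fs2 J); split => //; first by apply/displaysP; exists J.
case: S_tc => _ [S_equiv _]; apply: (S_equiv _ _ kS_Y _ Teq).
move: (kS_sep_strong kS_Y); case/and3P: kS_Y => ks_Y _ _.
rewrite /strong_ksep -eq_ks12 ks_Y !flower_petal_unionC //.
by rewrite !strong_petal_union // eq_size.
Qed.

Lemma flower_equiv_transfer Fs1 Fs2 : weak set0 ->
  kflower lam k T Fs1 -> kflower lam k T Fs2 -> size Fs1 = size Fs2 ->
  (forall J, ks (petal_union Fs1 J) = ks (petal_union Fs2 J)) ->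
  (forall J, fcl (petal_union Fs1 J) = fcl (petal_union Fs2 J)) ->
  flower_equiv lam k T S Fs1 Fs2.
Proof.
by move=> w0 fl1 fl2 eq_size eq_ks12 eq_fcl12; split; apply: flower_preceq_transfer.
Qed.

End TreeCompatible.
End Tangle.

Theorem lemma4p6 (E : finType) (lam : {set E} -> int) (k : int)
  (T S : {set {set E}}) (P1 : {set E}) (Ps : seq {set E}) (X : {set E}) :
  connectivity_system lam ->
  tangle lam k T ->
  tree_compatible lam k T S ->
  kflower lam k T (P1 :: Ps) ->
  S_order_ge lam k T S 2 (P1 :: Ps) ->
  no_loose_petals lam k T (P1 :: Ps) ->
  X \subset ~: P1 -> X != set0 -> weak T X -> kseparating lam k (P1 :|: X) ->
  (kflower lam k T ((P1 :|: X) :: [seq P :\: X | P <- Ps]) /\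
   flower_equiv lam k T S (P1 :: Ps) ((P1 :|: X) :: [seq P :\: X | P <- Ps])) /\
  (fcl lam k T P1 = fcl lam k T (P1 :|: X) /\
   forall P, P \in Ps -> fcl lam k T (P :\: X) = fcl lam k T P).
Proof.
move=> conn tangleT S_tc F_flower _ F_not_loose _ _ X_weak P1X_ks.
have flG := G_flower conn tangleT F_flower F_not_loose X_weak P1X_ks.
have fclG := fcl_petalG conn tangleT F_flower F_not_loose X_weak P1X_ks.
split; first split => //.
  apply: (flower_equiv_transfer S_tc (weak_set0 X_weak) F_flower flG).
  - by rewrite size_G.
  - exact: (ks_unionG conn tangleT F_flower F_not_loose X_weak P1X_ks).
  - exact: (fcl_unionG conn tangleT F_flower F_not_loose X_weak P1X_ks).
split; first exact: esym (fclG 0%N (ltn0Sn _)).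
move=> P /(nthP set0) [i lt_i <-].
by have := fclG i.+1 lt_i; rewrite petalGS.
Qed.
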